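(* Let $G$ be an $X-Y$ normalized graph, let $S \subseteq N(X)$, and assume that no vertex of $S$ is adjacent to a vertex of $Y$. Then there is exactly one important witness $K(S)$ of $S$.
   Context: $G$ is a finite undirected graph and $X,Y$ are disjoint subsets of $V(G)$; $N(C)=(\bigcup_{v\in C}N(v))\setminus C$. An $X-Y$ separator is a set $K \subseteq V(G) \setminus (X \cup Y)$ such that $G \setminus K$ has no path from $X$ to $Y$; minimal means inclusion-minimal. $G$ is $X-Y$ normalized if $N(X)$ is the only minimum-cardinality $X-Y$ separator. Let $r$ be the minimum size of an $X-Y$ separator; the excess of an $X-Y$ separator $K$ is $|K|-r$. For $S\subseteq N(X)$, the cover excess $CE(S)$ is the excess of a smallest $X-Y$ separator disjoint with $S$ (infinite if $S$ is adjacent to $Y$). An $X-Y$ separator $K$ with $K\cap S=\emptyset$ and excess $CE(S)$ is a witness of $S$. $NR(G,Y,K)$ is the set of vertices not reachable from $Y$ in $G\setminus K$; $K \geq K'$ means $NR(G,Y,K)\supseteq NR(G,Y,K')$, and $K'<K$ means $K\geq K'$ and $NR(G,Y,K)\ne NR(G,Y,K')$. A minimal $X-Y$ separator $K$ is important if there is no $X-Y$ separator $K'$ with $K<K'$ and $|K|\geq|K'|$. An important witness of $S$ is a witness of $S$ that is an important $X-Y$ separator. *)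

(* A finite simple graph is a symmetric irreflexive relation
   e on a finType T; V(G) = T. *)
From mathcomp Require Import all_boot.
Set Implicit Arguments. Unset Strict Implicit. Unset Printing Implicit Defensive.

Section Sep.
Variables (T : finType) (e : rel T) (X Y : {set T}).

Definition nbh (C : {set T}) : {set T} :=
  [set v | (v \notin C) && [exists u in C, e u v]].

Definition del_rel (K : {set T}) : rel T :=
  [rel u v | [&& e u v, u \notin K & v \notin K]].

Definition separator (K : {set T}) : bool :=
  [disjoint K & X :|: Y] &&
  ~~ [exists x in X, exists y in Y, connect (del_rel K) x y].

Definition min_separator (K : {set T}) : Prop :=
  separator K /\ forall K', separator K' -> #|K| <= #|K'|.

Definition minimal_separator (K : {set T}) : Prop :=
  separator K /\ forall K', separator K' -> K' \subset K -> K' = K.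

Definition normalized : Prop :=
  forall K, min_separator K <-> K = nbh X.

Definition sep_number : nat :=
  \big[minn/#|T|.+1]_(K : {set T} | separator K) #|K|.

Definition excess (K : {set T}) : nat := #|K| - sep_number.

Definition adjacent_to (S B : {set T}) : bool :=
  [exists s in S, exists y in B, e s y].

(* cover excess; None stands for infinity *)
Definition cover_excess (S : {set T}) : option nat :=
  if adjacent_to S Y then None
  else Some (\big[minn/#|T|.+1]_(K : {set T} | separator K && [disjoint K & S])
               excess K).

Definition witness (S K : {set T}) : Prop :=
  separator K /\ [disjoint K & S] /\ cover_excess S = Some (excess K).

Definition NR (K : {set T}) : {set T} :=
  [set v | ~~ ((v \notin K) && [exists y in Y, connect (del_rel K) y v])].

Definition sep_ge (K K' : {set T}) : Prop := NR K' \subset NR K.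
Definition sep_lt (K' K : {set T}) : Prop := sep_ge K K' /\ NR K <> NR K'.

Definition important (K : {set T}) : Prop :=
  minimal_separator K /\
  ~ (exists K', separator K' /\ sep_lt K K' /\ #|K| >= #|K'|).

Definition important_witness (S K : {set T}) : Prop :=
  witness S K /\ important K.

End Sep.

From mathcomp Require Import all_boot.

Set Implicit Arguments. Unset Strict Implicit. Unset Printing Implicit Defensive.

(* Call a separator disjoint from S a cover of S (the witnesses of S are the
   minimum covers), and let U(K) = [Yreach K] be the set of vertices
   reachable from Y in G \ K.  Then N(U(K)) is a separator contained
   in K with NR(K) included in NR(N(U(K))), and |N(.)| is submodular.
   Existence: a minimum cover K maximising |NR(K)| is important, because a
   separator K' dominating K could be replaced by N(U(K')), which is still a
   cover (a vertex of S outside K has a neighbour in X, so it cannot touch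
   U(K') without joining Y to X in G \ K) and has a strictly larger NR.
   Uniqueness: for minimum covers K1, K2, submodularity applied to U(K1) and
   U(K2) shows that N(U(K1) :&: U(K2)) is again a minimum cover, and it
   dominates both K1 and K2.  If both are important, they therefore have the
   same NR, and an important separator K is recovered from NR(K) as
   N(U(K)).  Normalization only serves to make N(X) a separator, so that
   N(X :|: S) is a cover and minimum covers exist. *)

Lemma bigmin_leq (I : finType) (P : pred I) (F : I -> nat) d i :
  P i -> \big[minn/d]_(j | P j) F j <= F i.
Proof.
have : i \in index_enum I by rewrite mem_index_enum.
elim: (index_enum I) => //= j r IHr; rewrite inE big_cons.
case/orP => [/eqP<- -> | /IHr IH Pi]; first exact: geq_minl.
by case: (P j); rewrite ?geq_min IH ?orbT.
Qed.

Lemma leq_bigmin (I : finType) (P : pred I) (F : I -> nat) d m :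
  m <= d -> (forall i, P i -> m <= F i) -> m <= \big[minn/d]_(j | P j) F j.
Proof. by move=> md mF; elim/big_ind: _ => // x y; rewrite leq_min => -> ->. Qed.

Lemma disjointsU (T : finType) (A B C : {set T}) :
  [disjoint A :|: B & C] = [disjoint A & C] && [disjoint B & C].
Proof. by rewrite !disjoints_subset subUset. Qed.

Section Neighbourhoods.
Variables (T : finType) (e : rel T).

Lemma disjoint_nbh (W : {set T}) : [disjoint nbh e W & W].
Proof. by apply/pred0P => v /=; rewrite inE; case: (v \in W); rewrite ?andbF. Qed.

Lemma disjoint_nbh_nonadjacent (A B : {set T}) :
  ~~ adjacent_to e A B -> [disjoint nbh e A & B].
Proof.
move=> nadj; apply/pred0P => v /=; apply/negbTE/andP => -[+ vB].
rewrite inE => /andP[_ /existsP[a /andP[aA eav]]]; case/negP: nadj.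
by apply/existsP; exists a; rewrite aA; apply/existsP; exists v; rewrite vB.
Qed.

Lemma nbh_setI_sub (A B : {set T}) : nbh e (A :&: B) \subset nbh e A :|: nbh e B.
Proof.
apply/subsetP => v; rewrite !inE negb_and => /andP[nAB /existsP[u]].
rewrite !inE => /andP[/andP[uA uB] euv].
by case/orP: nAB => [vA|vB]; apply/orP; [left|right]; rewrite ?vA ?vB /=;
  apply/existsP; exists u; rewrite ?uA ?uB euv.
Qed.

Lemma nbh_setU_sub (A B : {set T}) : nbh e (A :|: B) \subset nbh e A :|: nbh e B.
Proof.
apply/subsetP => v; rewrite !inE negb_or => /andP[/andP[vA vB] /existsP[u]].
rewrite !inE => /andP[/orP[uA|uB] euv]; apply/orP; [left|right];
  by rewrite ?vA ?vB /=; apply/existsP; exists u; rewrite ?uA ?uB euv.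
Qed.

Lemma nbh_setI_setU_sub (A B : {set T}) :
  nbh e (A :&: B) :&: nbh e (A :|: B) \subset nbh e A :&: nbh e B.
Proof.
apply/subsetP => v; rewrite !inE => /andP[/andP[_ /existsP[u]]].
rewrite !inE negb_or => /andP[/andP[uA uB] euv] /andP[/andP[vA vB] _].
by rewrite vA vB /=; apply/andP; split; apply/existsP; exists u; rewrite ?uA ?uB euv.
Qed.

Lemma card_nbh_submod (A B : {set T}) :
  #|nbh e (A :&: B)| + #|nbh e (A :|: B)| <= #|nbh e A| + #|nbh e B|.
Proof.
rewrite -cardsUI -(cardsUI (nbh e A)); apply: leq_add; apply: subset_leq_card.
  by rewrite subUset nbh_setI_sub nbh_setU_sub.
exact: nbh_setI_setU_sub.
Qed.

Hypothesis e_sym : symmetric e.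

Lemma del_rel_sym (K : {set T}) : symmetric (del_rel e K).
Proof. by move=> u v; rewrite /del_rel /= e_sym (andbC (u \notin K)). Qed.

Lemma connect_del_nbh_closed (W : {set T}) u v :
  u \in W -> connect (del_rel e (nbh e W)) u v -> v \in W.
Proof.
move=> uW /connectP[p + ->]; elim: p u uW => //= w p IHp u uW.
case/andP=> /and3P[euw _ wN]; apply: IHp; apply: contraNT wN => wW.
by rewrite inE wW; apply/existsP; exists u; rewrite uW.
Qed.

Lemma separator_sym (X Y K : {set T}) : separator e X Y K = separator e Y X K.
Proof.
rewrite /separator setUC; congr (_ && ~~ _).
apply/existsP/existsP => -[a /andP[aA /existsP[b /andP[bB cab]]]];
  exists b; rewrite bB; apply/existsP; exists a;
  by rewrite aA (sym_connect_sym (del_rel_sym K)).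
Qed.

Lemma separator_connect (X Y K : {set T}) x y :
  separator e X Y K -> x \in X -> y \in Y -> ~~ connect (del_rel e K) x y.
Proof.
case/andP=> _ noXY xX yY; apply: contra noXY => cxy.
by apply/existsP; exists x; rewrite xX; apply/existsP; exists y; rewrite yY.
Qed.

Lemma separator_nbh (X Y W : {set T}) :
  Y \subset W -> [disjoint W & X] -> [disjoint nbh e W & X :|: Y] ->
  separator e X Y (nbh e W).
Proof.
move=> YW WX NXY; rewrite /separator NXY /=.
apply/existsP => -[x /andP[xX /existsP[y /andP[yY cxy]]]].
rewrite (sym_connect_sym (del_rel_sym _)) in cxy.
by move: (connect_del_nbh_closed (subsetP YW y yY) cxy); rewrite (disjointFl WX xX).
Qed.

Section Separators.
Variables X Y : {set T}.

Definition Yreach (K : {set T}) : {set T} := ~: NR e Y K.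

Lemma mem_Yreach K v :
  (v \in Yreach K) = (v \notin K) && [exists y in Y, connect (del_rel e K) y v].
Proof. by rewrite !inE negbK. Qed.

Lemma Yreach_step K u v : u \in Yreach K -> e u v -> v \notin K -> v \in Yreach K.
Proof.
rewrite !mem_Yreach => /andP[uK /existsP[y /andP[yY cyu]]] euv vK.
rewrite vK; apply/existsP; exists y; rewrite yY.
by apply: connect_trans cyu (connect1 _); rewrite /del_rel /= euv uK vK.
Qed.

Lemma nbh_Yreach_sub K : nbh e (Yreach K) \subset K.
Proof.
apply/subsetP => v; rewrite inE => /andP[vU /existsP[u /andP[uU euv]]].
by apply: contraR vU; apply: Yreach_step uU euv.
Qed.

Lemma Y_sub_Yreach K : separator e X Y K -> Y \subset Yreach K.
Proof.
case/andP=> KXY _; apply/subsetP => y yY.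
rewrite mem_Yreach (disjointFl KXY) ?inE ?yY ?orbT //=.
by apply/existsP; exists y; rewrite yY connect0.
Qed.

Lemma Yreach_disjoint_X K : separator e X Y K -> [disjoint Yreach K & X].
Proof.
move=> sK; rewrite disjoint_sym; apply/pred0P => x /=; apply/negbTE.
apply/andP => -[xX]; rewrite mem_Yreach => /andP[_ /existsP[y /andP[yY cyx]]].
rewrite (sym_connect_sym (del_rel_sym K)) in cyx.
by case/negP: (separator_connect sK xX yY).
Qed.

Lemma separator_nbh_Yreach K : separator e X Y K -> separator e X Y (nbh e (Yreach K)).
Proof.
move=> sK; apply: separator_nbh; rewrite ?Y_sub_Yreach ?Yreach_disjoint_X //.
by apply: disjointWl (nbh_Yreach_sub K) _; case/andP: sK.
Qed.

Lemma NR_sub_nbh (W K : {set T}) :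
  Y \subset W -> W \subset Yreach K -> NR e Y K \subset NR e Y (nbh e W).
Proof.
move=> YW WU; rewrite -setCS setCK in WU; apply: subset_trans WU _.
apply/subsetP => v; rewrite !inE => vW; apply: contra vW => /andP[_].
by case/existsP=> y /andP[yY cyv]; apply: connect_del_nbh_closed (subsetP YW y yY) cyv.
Qed.

Lemma important_nbh_Yreach K : important e X Y K -> nbh e (Yreach K) = K.
Proof.
case=> -[sK minK] _.
by apply: minK; [apply: separator_nbh_Yreach | apply: nbh_Yreach_sub].
Qed.

Lemma important_NR_eq K K' : important e X Y K -> separator e X Y K' ->
  NR e Y K \subset NR e Y K' -> #|K'| <= #|K| -> NR e Y K' = NR e Y K.
Proof.
case=> _ notDominated sK' ge le; apply/eqP; apply: contraT => /eqP neq.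
by case: notDominated; exists K'.
Qed.

Section Covers.
Variable S : {set T}.

Definition cover (K : {set T}) : bool := separator e X Y K && [disjoint K & S].

Definition min_cover (K : {set T}) : Prop :=
  cover K /\ forall K', cover K' -> #|K| <= #|K'|.

Lemma witnessP K : ~~ adjacent_to e S Y -> witness e X Y S K <-> min_cover K.
Proof.
have sn_le K' : separator e X Y K' -> sep_number e X Y <= #|K'|.
  by move=> sK'; apply: bigmin_leq.
move=> nadj; rewrite /witness /cover_excess (negbTE nadj); split.
  case=> sK [dK [minE]]; split => [|K' /andP[sK' dK']]; first by rewrite /cover sK dK.
  rewrite -(leq_sub2rE _ (sn_le _ sK')) -[_ - _]/(excess e X Y K) -minE.
  by apply: bigmin_leq; rewrite sK' dK'.
case=> /andP[sK dK] minK; split => //; split => //; congr Some; apply/eqP.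
rewrite eqn_leq bigmin_leq ?sK ?dK //=; apply: leq_bigmin.
  exact: leq_trans (leq_subr _ _) (leq_trans (max_card _) _).
by move=> K' cK'; apply: leq_sub2r; apply: minK.
Qed.

Lemma cover_nbh_sub (W K1 K2 : {set T}) : cover K1 -> cover K2 ->
  Y \subset W -> [disjoint W & X] -> nbh e W \subset K1 :|: K2 -> cover (nbh e W).
Proof.
move=> /andP[/andP[K1XY _] K1S] /andP[/andP[K2XY _] K2S] YW WX NK.
have disjN (A : {set T}) : [disjoint K1 & A] -> [disjoint K2 & A] -> [disjoint nbh e W & A].
  by move=> K1A K2A; apply: disjointWl NK _; rewrite disjointsU K1A.
by rewrite /cover disjN // andbT separator_nbh // disjN.
Qed.

Lemma min_cover_nbh_Yreach_setI K1 K2 : min_cover K1 -> min_cover K2 ->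
  min_cover (nbh e (Yreach K1 :&: Yreach K2)).
Proof.
move=> [cK1 minK1] [cK2 minK2].
have [/andP[sK1 _] /andP[sK2 _]] := (cK1, cK2).
set W1 := Yreach K1; set W2 := Yreach K2.
have YW1 : Y \subset W1 := Y_sub_Yreach sK1.
have YW : Y \subset W1 :&: W2 by rewrite subsetI YW1 Y_sub_Yreach.
have [W1X W2X] := (Yreach_disjoint_X sK1, Yreach_disjoint_X sK2).
have NK1 : #|nbh e W1| <= #|K1| by apply/subset_leq_card/nbh_Yreach_sub.
have NK2 : #|nbh e W2| <= #|K2| by apply/subset_leq_card/nbh_Yreach_sub.
have NW12 : nbh e W1 :|: nbh e W2 \subset K1 :|: K2 by apply: setUSS; apply: nbh_Yreach_sub.
have cI : cover (nbh e (W1 :&: W2)).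
  apply: cover_nbh_sub cK1 cK2 YW _ (subset_trans (nbh_setI_sub _ _) NW12).
  exact: disjointWl (subsetIl _ _) W1X.
have cU : cover (nbh e (W1 :|: W2)).
  apply: cover_nbh_sub cK1 cK2 (subset_trans YW1 (subsetUl _ _)) _ _.
    by rewrite disjointsU W1X.
  exact: subset_trans (nbh_setU_sub _ _) NW12.
have leK2 : #|nbh e (W1 :&: W2)| <= #|K2|.
  rewrite -(leq_add2r #|K1|) [#|K2| + _]addnC.
  apply: leq_trans (leq_add (leqnn _) (minK1 _ cU)) _.
  exact: leq_trans (card_nbh_submod _ _) (leq_add NK1 NK2).
by split => // K' cK'; apply: leq_trans leK2 (minK2 _ cK').
Qed.

Lemma important_min_cover_eq K1 K2 : min_cover K1 -> min_cover K2 ->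
  important e X Y K1 -> important e X Y K2 -> K1 = K2.
Proof.
move=> mK1 mK2 iK1 iK2.
have [[/andP[sK1 _] _] [/andP[sK2 _] _]] := (mK1, mK2).
have [/andP[sM _] minM] := min_cover_nbh_Yreach_setI mK1 mK2.
have YW : Y \subset Yreach K1 :&: Yreach K2 by rewrite subsetI !Y_sub_Yreach.
have E1 := important_NR_eq iK1 sM (NR_sub_nbh YW (subsetIl _ _)) (minM _ mK1.1).
have E2 := important_NR_eq iK2 sM (NR_sub_nbh YW (subsetIr _ _)) (minM _ mK2.1).
by rewrite -(important_nbh_Yreach iK1) -(important_nbh_Yreach iK2) /Yreach -E1 E2.
Qed.

Hypothesis SN : S \subset nbh e X.

Lemma cover_nbh_XS : [disjoint X & Y] -> separator e X Y (nbh e X) ->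
  ~~ adjacent_to e S Y -> cover (nbh e (X :|: S)).
Proof.
move=> XY /andP[NX_XY _] nadj.
have NXY : [disjoint nbh e X & Y] by apply: disjointWr NX_XY; apply: subsetUr.
have SY : [disjoint S & Y] := disjointWl SN NXY.
have N_XS := disjoint_nbh (X :|: S).
rewrite /cover (disjointWr (subsetUr _ _) N_XS) andbT separator_sym.
apply: separator_nbh; rewrite ?subsetUl ?disjointsU ?XY ?SY //.
rewrite disjoint_sym disjointsU disjoint_sym (disjoint_sym X).
rewrite (disjointWr (subsetUl _ _) N_XS) andbT.
by apply: disjointWl (nbh_setU_sub _ _) _; rewrite disjointsU NXY disjoint_nbh_nonadjacent.
Qed.

Lemma cover_nbh_Yreach K K' : cover K -> separator e X Y K' ->
  NR e Y K \subset NR e Y K' -> cover (nbh e (Yreach K')).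
Proof.
move=> /andP[sK KS] sK' ge; rewrite /cover separator_nbh_Yreach //=.
have UK : Yreach K' \subset Yreach K by rewrite setCS.
apply/pred0P => s /=; apply/negbTE/andP => -[sN sS].
have sK_notin : s \notin K by rewrite (disjointFl KS sS).
move: sN; rewrite inE => /andP[_ /existsP[u /andP[uU eus]]].
have sU := Yreach_step (subsetP UK u uU) eus sK_notin.
move: (subsetP SN s sS); rewrite inE => /andP[_ /existsP[x /andP[xX exs]]].
have xK : x \notin K by rewrite (disjointFl (andP sK).1) // inE xX.
have esx : e s x by rewrite e_sym.
have := Yreach_step sU esx xK.
by rewrite (disjointFl (Yreach_disjoint_X sK)).
Qed.

Lemma min_cover_max_NR_important K : min_cover K ->
  (forall K', min_cover K' -> #|NR e Y K'| <= #|NR e Y K|) -> important e X Y K.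
Proof.
move=> [cK minK] maxK; have [sK KS] := andP cK; split.
  split => // K' sK' K'K; apply/eqP; rewrite eqEcard K'K /=.
  by apply: minK; rewrite /cover sK' (disjointWl K'K KS).
case=> K' [sK' [[ge neq] le]].
set N := nbh e (Yreach K').
have mN : min_cover N.
  split; first exact: cover_nbh_Yreach cK sK' ge.
  move=> K'' cK''; apply: leq_trans (minK _ cK'').
  by apply: leq_trans le; apply/subset_leq_card/nbh_Yreach_sub.
have ltNR : NR e Y K \proper NR e Y N.
  apply: proper_sub_trans (NR_sub_nbh (Y_sub_Yreach sK') (subxx _)).
  by rewrite properEneq ge andbT; apply/eqP => E; apply: neq.
by have := maxK _ mN; rewrite leqNgt proper_card.
Qed.

Lemma exists_important_min_cover K0 :
  cover K0 -> exists K, min_cover K /\ important e X Y K.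
Proof.
move=> cK0; case: (arg_minnP (fun K : {set T} => #|K|) cK0) => Km cKm minKm.
have mKm : min_cover Km by split.
pose mc K := cover K && (#|K| == #|Km|).
have mcP K : reflect (min_cover K) (mc K).
  apply: (iffP andP) => [[cK /eqP cardK] | [cK minK]].
    by split => // K' cK'; rewrite cardK minKm.
  by split => //; rewrite eqn_leq minK //= minKm.
case: (arg_maxnP (fun K : {set T} => #|NR e Y K|) (introT (mcP Km) mKm)) => K /mcP mK maxK.
exists K; split => //; apply: min_cover_max_NR_important => // K' /mcP; exact: maxK.
Qed.

End Covers.
End Separators.
End Neighbourhoods.

Theorem lemma2 (T : finType) (e : rel T) (X Y : {set T}) (S : {set T}) :
  symmetric e -> irreflexive e -> [disjoint X & Y] ->
  normalized e X Y ->
  S \subset nbh e X ->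
  ~~ adjacent_to e S Y ->
  exists! K : {set T}, important_witness e X Y S K.
Proof.
move=> e_sym _ XY norm SN nadj.
have sNX : separator e X Y (nbh e X) by case: (norm (nbh e X)) => _ /(_ erefl) [].
have coverN := cover_nbh_XS e_sym SN XY sNX nadj.
have [K [mK iK]] := exists_important_min_cover e_sym SN coverN.
exists K; split; first by split => //; apply/(witnessP _ _ nadj).
by move=> K' [/(witnessP _ _ nadj) mK' iK']; apply: (important_min_cover_eq e_sym mK mK').
Qed.
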